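(* Let $X$ be a Tychonoff space which is a $P$-space. Then $X$ is an $F_cP$-space, i.e. $C_c(X)_F$ is a von Neumann regular ring.
   Context: $C_c(X)_F$ denotes the set of all functions $f:X\to\mathbb{R}$ whose range is countable and whose set of points of discontinuity is finite; it is a commutative ring with unity under pointwise operations. A Tychonoff space $X$ is a $P$-space if every zero set of a continuous real-valued function on $X$ is open (equivalently, the ring $C(X)$ is von Neumann regular). A commutative ring $R$ is von Neumann regular if for every $a\in R$ there is $r\in R$ with $a=a^2r$. $X$ is an $F_cP$-space if $C_c(X)_F$ is von Neumann regular. *)

From HB Require Import structures.
From mathcomp Require Import all_boot all_order all_algebra.
From mathcomp Require Import all_classical all_reals all_analysis.
Set Implicit Arguments. Unset Strict Implicit. Unset Printing Implicit Defensive.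
Import Order.TTheory GRing.Theory Num.Theory numFieldNormedType.Exports.
Local Open Scope classical_set_scope.
Local Open Scope ring_scope.

Definition tychonoff_space (R : realType) (X : topologicalType) : Prop :=
  accessible_space X /\
  (forall (a : X) (B : set X), closed B -> ~ B a ->
     exists f : X -> R, continuous f /\ f a = 0 /\ (forall b, B b -> f b = 1)).

Definition zero_set (R : realType) (X : Type) (f : X -> R) : set X :=
  [set x | f x = 0].

Definition P_space (R : realType) (X : topologicalType) : Prop :=
  forall f : X -> R, continuous f -> open (zero_set f).

Definition discontinuities (R : realType) (X : topologicalType) (f : X -> R)
  : set X := [set x | ~ {for x, continuous f}].

Definition in_CcF (R : realType) (X : topologicalType) (f : X -> R) : Prop :=
  countable (range f) /\ finite_set (discontinuities f).

(* C_c(X)_F is von Neumann regular (pointwise ring operations). *)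
Definition FcP_space (R : realType) (X : topologicalType) : Prop :=
  forall f : X -> R, in_CcF f ->
    exists r : X -> R, in_CcF r /\ (forall x, f x = f x ^+ 2 * r x).

From mathcomp Require Import all_boot all_order all_algebra.
From mathcomp Require Import all_classical all_reals all_analysis.
Set Implicit Arguments. Unset Strict Implicit. Unset Printing Implicit Defensive.
Import Order.TTheory GRing.Theory Num.Theory numFieldNormedType.Exports.
Local Open Scope classical_set_scope.
Local Open Scope ring_scope.

(* The witness of regularity is the pointwise inverse f^-1 (with 0^-1 = 0).
   Its range is the image of the range of f, and it is continuous wherever f
   is, except possibly at a zero x of f; there it suffices that f vanishes on
   a neighbourhood of x.  To see this, separate x from the finite, hence
   closed, set D of discontinuities of f by a continuous k with k x = 0 and
   k = 1 on D.  In a P-space the zero set Z of k is clopen, so f restricted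
   to Z and extended by 0 is continuous; its zero set is again open, contains
   x, and meets Z only where f vanishes. *)

Lemma expr2_mulV (F : fieldType) (a : F) : a ^+ 2 * a^-1 = a.
Proof. by have [->|a0] := eqVneq a 0; rewrite ?invr0 ?mulr0 // expr2 mulfK. Qed.

Lemma countable_range_comp (T U V : Type) (f : T -> U) (g : U -> V) :
  countable (range f) -> countable (range (g \o f)).
Proof.
move=> cf; rewrite -(image_comp f g).
exact: sub_countable (card_image_le _ _) cf.
Qed.

Lemma nbhs_open_set (T : topologicalType) (A : set T) (x : T) :
  open A -> A x -> \forall y \near x, A y.
Proof. by move=> oA Ax; apply: open_nbhs_nbhs. Qed.

Lemma continuous_patch_clopen (T U : topologicalType) (Z : set T) (c : U)
    (f : T -> U) :
  open Z -> closed Z -> {in Z, continuous f} ->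
  continuous (patch (fun=> c) Z f).
Proof.
move=> oZ cZ fZ y; have [Zy|nZy] := pselect (Z y).
  have yZ : y \in Z by rewrite inE.
  have nearZ : \forall z \near y, Z z by exact: nbhs_open_set.
  rewrite /continuous_at patchT //; apply: cvg_trans (fZ _ yZ).
  by apply: near_eq_cvg; near=> z; rewrite patchT // inE; near: z.
have nearNZ : \forall z \near y, (~` Z) z by apply: nbhs_open_set; rewrite ?openC.
apply: (near_cst_continuous c); near=> z.
by rewrite patchC // inE; near: z.
Unshelve. all: by end_near.
Qed.

Lemma closed_zero_set (R : realType) (X : topologicalType) (k : X -> R) :
  continuous k -> closed (zero_set k).
Proof. by move=> kc; apply: (continuous_closedP k).1 kc _ (@closed_eq R 0). Qed.

Lemma P_space_near_zero (R : realType) (X : topologicalType) (f : X -> R)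
    (x : X) :
  tychonoff_space R X -> P_space R X ->
  finite_set (discontinuities f) -> {for x, continuous f} -> f x = 0 ->
  \forall y \near x, f y = 0.
Proof.
move=> [accX sepX] PX finD fx fx0.
have cD : closed (discontinuities f).
  exact: accessible_finite_set_closed.1 accX _ finD.
have [k [kc [kx0 kD1]]] := sepX x _ cD (fun nfx => nfx fx).
pose Z := zero_set k.
have oZ : open Z by exact: PX.
have fZ : {in Z, continuous f}.
  move=> y; rewrite inE => ky0; apply: contrapT => /kD1.
  by rewrite ky0 => /eqP; rewrite eq_sym oner_eq0.
pose g := patch (fun=> 0) Z f.
have gc : continuous g.
  by apply: continuous_patch_clopen => //; exact: closed_zero_set.
have nearZ : \forall y \near x, Z y by exact: nbhs_open_set.
have nearg0 : \forall y \near x, zero_set g y.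
  by apply: nbhs_open_set; [exact: PX | rewrite /zero_set /= /g patchT // inE].
near=> y; have Zy : y \in Z by rewrite inE; near: y.
by rewrite -(patchT (fun=> 0) f Zy); near: y.
Unshelve. all: by end_near.
Qed.

Lemma continuous_inv_at (T : topologicalType) (K : numFieldType) (f : T -> K)
    (x : T) :
  {for x, continuous f} -> (f x = 0 -> \forall y \near x, f y = 0) ->
  {for x, continuous (fun y => (f y)^-1)}.
Proof.
move=> fx f0; have [/f0 near0|fx0] := eqVneq (f x) 0.
  by apply: (near_cst_continuous 0); near=> y; rewrite (near near0 y) ?invr0.
exact: continuous_comp fx (inv_continuous fx0).
Unshelve. all: by end_near.
Qed.

Theorem theorem7p5 (R : realType) (X : topologicalType) :
  tychonoff_space R X -> P_space R X -> FcP_space R X.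
Proof.
move=> tychX PX f [cf finD].
exists (fun x => (f x)^-1); split; last by move=> x; rewrite expr2_mulV.
split; first exact: (countable_range_comp GRing.inv cf).
apply: sub_finite_set (finD) => x /= nrx; apply: contrapT => /contrapT fx.
apply: nrx; apply: continuous_inv_at (fx) _.
exact: (P_space_near_zero tychX PX finD fx).
Qed.
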